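(* Let $\mathcal{A}$ be an abelian category. (1) Assume that $\mathcal{A}$ has coproducts, let $M$ be a finitely generated object of $\mathcal{A}$ and let $(N_i)_{i\in I}$ be a family of objects of $\mathcal{A}$. Then $\bigoplus_{i\in I} N_i$ is strongly $M$-Rickart if and only if $N_i$ is strongly $M$-Rickart for every $i\in I$. (2) Assume that $\mathcal{A}$ has products, let $N$ be a finitely cogenerated object of $\mathcal{A}$ and let $(M_i)_{i\in I}$ be a family of objects of $\mathcal{A}$ such that $N$ is dual strongly $M_i$-Rickart for every $i\in I$. Then $N$ is dual strongly $\prod_{i\in I} M_i$-Rickart if and only if $N$ is dual strongly $M_i$-Rickart for every $i\in I$.
   Context: Finitely generated and finitely cogenerated objects are meant in the usual categorical sense (in particular, every morphism from a finitely generated object $M$ to a coproduct $\bigoplus_{i\in I}N_i$ factors through $\bigoplus_{i\in F}N_i$ for some finite $F\subseteq I$, and dually for finitely cogenerated objects and products). A morphism $f:X\to Y$ is a section if $f'f=1_X$ for some $f'$, a retraction if $ff'=1_Y$ for some $f'$. A monomorphism $k:K\to X$ is fully invariant if for every $h:X\to X$ there is $\alpha:K\to K$ with $hk=k\alpha$; an epimorphism $c:X\to C$ is fully coinvariant if for every $h:X\to X$ there is $\gamma:C\to C$ with $ch=\gamma c$. For objects $M,N$: $N$ is strongly $M$-Rickart if the kernel of every morphism $f:M\to N$ is a fully invariant section; $N$ is dual strongly $M$-Rickart if the cokernel of every morphism $f:M\to N$ is a fully coinvariant retraction. *)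

From mathcomp Require Import all_boot all_algebra.
Set Implicit Arguments. Unset Strict Implicit. Unset Printing Implicit Defensive.
Import GRing.Theory.
Local Open Scope ring_scope.

(* A preadditive category: hom-sets are abelian groups and composition
   (comp g f = "g after f") is bilinear. *)
Record PreAdditive : Type := {
  Obj :> Type;
  Mor : Obj -> Obj -> zmodType;
  comp : forall A B C : Obj, Mor B C -> Mor A B -> Mor A C;
  idm : forall A : Obj, Mor A A;
  compA : forall A B C D (h : Mor C D) (g : Mor B C) (f : Mor A B),
      comp h (comp g f) = comp (comp h g) f;
  comp1m : forall A B (f : Mor A B), comp (idm B) f = f;
  compm1 : forall A B (f : Mor A B), comp f (idm A) = f;
  compDl : forall A B C (g1 g2 : Mor B C) (f : Mor A B),
      comp (g1 + g2) f = comp g1 f + comp g2 f;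
  compDr : forall A B C (g : Mor B C) (f1 f2 : Mor A B),
      comp g (f1 + f2) = comp g f1 + comp g f2
}.
Arguments Mor {p}.
Arguments comp {p A B C}.
Arguments idm {p}.

Section Cat.
Variable C : PreAdditive.

Definition mono (A B : C) (f : Mor A B) : Prop :=
  forall Z (g h : Mor Z A), comp f g = comp f h -> g = h.
Definition epi (A B : C) (f : Mor A B) : Prop :=
  forall Z (g h : Mor B Z), comp g f = comp h f -> g = h.

Definition is_kernel (A B K : C) (f : Mor A B) (k : Mor K A) : Prop :=
  comp f k = 0 /\
  forall Z (g : Mor Z A), comp f g = 0 ->
    exists u : Mor Z K, comp k u = g /\ forall v : Mor Z K, comp k v = g -> v = u.

Definition is_cokernel (A B Q : C) (f : Mor A B) (c : Mor B Q) : Prop :=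
  comp c f = 0 /\
  forall Z (g : Mor B Z), comp g f = 0 ->
    exists u : Mor Q Z, comp u c = g /\ forall v : Mor Q Z, comp v c = g -> v = u.

Definition is_zero_object (Z : C) : Prop :=
  forall X : C, (forall f g : Mor Z X, f = g) /\ (forall f g : Mor X Z, f = g).

Definition is_binproduct (A B P : C) (p1 : Mor P A) (p2 : Mor P B) : Prop :=
  forall Z (f1 : Mor Z A) (f2 : Mor Z B),
    exists u : Mor Z P, (comp p1 u = f1 /\ comp p2 u = f2) /\
      forall v : Mor Z P, comp p1 v = f1 -> comp p2 v = f2 -> v = u.

Definition is_abelian : Prop :=
  (exists Z : C, is_zero_object Z) /\
  (forall A B : C, exists P (p1 : Mor P A) (p2 : Mor P B), is_binproduct p1 p2) /\
  (forall (A B : C) (f : Mor A B), exists K (k : Mor K A), is_kernel f k) /\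
  (forall (A B : C) (f : Mor A B), exists Q (c : Mor B Q), is_cokernel f c) /\
  (forall (A B : C) (m : Mor A B), mono m ->
      exists Q (g : Mor B Q), is_kernel g m) /\
  (forall (A B : C) (e : Mor A B), epi e ->
      exists K (g : Mor K A), is_cokernel g e).

Definition is_coproduct (I : Type) (N : I -> C) (S : C)
    (iota : forall i, Mor (N i) S) : Prop :=
  forall Z (f : forall i, Mor (N i) Z),
    exists u : Mor S Z, (forall i, comp u (iota i) = f i) /\
      forall v : Mor S Z, (forall i, comp v (iota i) = f i) -> v = u.

Definition is_product (I : Type) (M : I -> C) (P : C)
    (pi : forall i, Mor P (M i)) : Prop :=
  forall Z (f : forall i, Mor Z (M i)),
    exists u : Mor Z P, (forall i, comp (pi i) u = f i) /\
      forall v : Mor Z P, (forall i, comp (pi i) v = f i) -> v = u.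

Definition has_coproducts : Prop :=
  forall (I : Type) (N : I -> C), exists S (iota : forall i, Mor (N i) S),
    @is_coproduct I N S iota.

Definition has_products : Prop :=
  forall (I : Type) (M : I -> C), exists P (pi : forall i, Mor P (M i)),
    @is_product I M P pi.

(* Finitely generated: every morphism M -> (coproduct of N_i, i in I) factors
   through the canonical morphism from the coproduct of the N_i, i in F, for
   some finite F ⊆ I (F given as the image of an injective s : 'I_n -> I). *)
Definition finitely_generated (M : C) : Prop :=
  forall (I : Type) (N : I -> C) (S : C) (iota : forall i, Mor (N i) S),
    @is_coproduct I N S iota ->
    forall f : Mor M S,
      exists (n : nat) (s : 'I_n -> I) (T : C)
             (j : forall k : 'I_n, Mor (N (s k)) T) (u : Mor T S) (h : Mor M T),
        [/\ injective s, @is_coproduct 'I_n (fun k => N (s k)) T j,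
            forall k, comp u (j k) = iota (s k)
          & f = comp u h].

Definition finitely_cogenerated (N : C) : Prop :=
  forall (I : Type) (M : I -> C) (P : C) (pi : forall i, Mor P (M i)),
    @is_product I M P pi ->
    forall f : Mor P N,
      exists (n : nat) (s : 'I_n -> I) (T : C)
             (q : forall k : 'I_n, Mor T (M (s k))) (u : Mor P T) (h : Mor T N),
        [/\ injective s, @is_product 'I_n (fun k => M (s k)) T q,
            forall k, comp (q k) u = pi (s k)
          & f = comp h u].

Definition section (A B : C) (f : Mor A B) : Prop :=
  exists f' : Mor B A, comp f' f = idm A.
Definition retraction (A B : C) (f : Mor A B) : Prop :=
  exists f' : Mor B A, comp f f' = idm B.

Definition fully_invariant (K X : C) (k : Mor K X) : Prop :=
  forall h : Mor X X, exists alpha : Mor K K, comp h k = comp k alpha.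
Definition fully_coinvariant (X Q : C) (c : Mor X Q) : Prop :=
  forall h : Mor X X, exists gamma : Mor Q Q, comp c h = comp gamma c.

(* strongly_rickart M N  <->  N is strongly M-Rickart *)
Definition strongly_rickart (M N : C) : Prop :=
  forall (f : Mor M N) (K : C) (k : Mor K M), is_kernel f k ->
    mono k /\ fully_invariant k /\ section k.

(* dual_strongly_rickart M N  <->  N is dual strongly M-Rickart *)
Definition dual_strongly_rickart (M N : C) : Prop :=
  forall (f : Mor M N) (Q : C) (c : Mor N Q), is_cokernel f c ->
    epi c /\ fully_coinvariant c /\ retraction c.

End Cat.
Arguments is_coproduct {C} I N S iota.
Arguments is_product {C} I M P pi.

(* A kernel k : K -> M of g is a fully invariant direct summand exactly when
   there is an idempotent e = k r of M with image ker g such that the image of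
   e is stable under every endomorphism (phi e = e phi e).  Since M is finitely
   generated, f : M -> (+)_i N_i factors through a finite subcoproduct, so
   ker f is the intersection of finitely many kernels ker (q_k h) of morphisms
   M -> N_(s k); composing their invariant idempotents gives an invariant
   idempotent with image ker f.  The statement on products is the same one in
   the opposite category. *)
From Pilot Require Import Defs.
From mathcomp Require Import all_boot all_algebra.
From Stdlib Require Import ClassicalEpsilon ProofIrrelevance.
Set Implicit Arguments. Unset Strict Implicit. Unset Printing Implicit Defensive.
Import GRing.Theory.
Local Open Scope ring_scope.
Local Notation comp := Defs.comp.
Local Notation compA := Defs.compA.

Section Preadditive.
Variable C : PreAdditive.

Lemma comp0m (A B D : C) (f : Mor A B) : comp (0 : Mor B D) f = 0.
Proof. by apply: (addrI (comp (0 : Mor B D) f)); rewrite -compDl !addr0. Qed.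

Lemma compm0 (A B D : C) (g : Mor B D) : comp g (0 : Mor A B) = 0.
Proof. by apply: (addrI (comp g (0 : Mor A B))); rewrite -compDr !addr0. Qed.

Lemma comp_suml (A B D : C) (I : Type) (r : seq I) (P : pred I)
    (F : I -> Mor B D) (f : Mor A B) :
  comp (\sum_(i <- r | P i) F i) f = \sum_(i <- r | P i) comp (F i) f.
Proof.
exact: (big_morph (fun g => comp g f) (fun a b => compDl a b f) (comp0m _ _)).
Qed.

Lemma section_mono (A B : C) (f : Mor A B) : section f -> mono f.
Proof.
move=> [f' f'f] Z g h fgh.
by rewrite -(comp1m g) -(comp1m h) -f'f -!compA fgh.
Qed.

Lemma kernel_mono (A B K : C) (f : Mor A B) (k : Mor K A) :
  is_kernel f k -> mono k.
Proof.
move=> [fk0 univ] Z g h kgh.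
have fkg0 : comp f (comp k g) = 0 by rewrite compA fk0 comp0m.
have [u [_ uniq_u]] := univ Z _ fkg0.
by rewrite (uniq_u g erefl) (uniq_u h (esym kgh)).
Qed.

Lemma is_kernel_comp_mono (A B D K : C) (f : Mor A B) (m : Mor B D)
    (k : Mor K A) :
  mono m -> is_kernel f k -> is_kernel (comp m f) k.
Proof.
move=> mono_m [fk0 univ]; split; first by rewrite -compA fk0 compm0.
move=> Z x mfx0; apply: univ; apply: mono_m.
by rewrite compA mfx0 compm0.
Qed.

Definition delta_mor (I : Type) (N : I -> C) (i j : I) : Mor (N j) (N i) :=
  match excluded_middle_informative (j = i) with
  | left e => match e in _ = y return Mor (N j) (N y) with erefl => idm (N j) end
  | right _ => 0
  end.

Lemma delta_mor_id (I : Type) (N : I -> C) (i : I) :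
  delta_mor N i i = idm (N i).
Proof.
rewrite /delta_mor; case: excluded_middle_informative => [e|] //.
by rewrite (proof_irrelevance _ e erefl).
Qed.

Lemma delta_mor_neq (I : Type) (N : I -> C) (i j : I) :
  j <> i -> delta_mor N i j = 0.
Proof. by rewrite /delta_mor; case: excluded_middle_informative. Qed.

Lemma coproduct_projection (I : Type) (N : I -> C) (S : C)
    (iota : forall i, Mor (N i) S) :
  is_coproduct I N S iota -> forall i, exists p : Mor S (N i),
    comp p (iota i) = idm (N i) /\ forall j, j <> i -> comp p (iota j) = 0.
Proof.
move=> coprodS i; have [p [p_iota _]] := coprodS (N i) (delta_mor N i).
exists p; split; first by rewrite p_iota delta_mor_id.
by move=> j ji; rewrite p_iota delta_mor_neq.
Qed.

Lemma finite_coproduct_sum_id (I : finType) (N : I -> C) (T : C)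
    (j : forall i, Mor (N i) T) (q : forall i, Mor T (N i)) :
  is_coproduct I N T j ->
  (forall i, comp (q i) (j i) = idm (N i)) ->
  (forall i l, l <> i -> comp (q i) (j l) = 0) ->
  \sum_i comp (j i) (q i) = idm T.
Proof.
move=> coprodT qj_id qj_0; have [w [_ uniq_w]] := coprodT T j.
rewrite [idm T](uniq_w _ (fun l => comp1m (j l))); apply: uniq_w => l.
rewrite comp_suml (bigD1 l) //= -compA qj_id compm1 big1 ?addr0 // => i il.
by rewrite -compA qj_0 ?compm0 // => li; rewrite li eqxx in il.
Qed.

Lemma finite_coproduct_jointly_monic (I : finType) (N : I -> C) (T Z : C)
    (j : forall i, Mor (N i) T) (q : forall i, Mor T (N i)) (x : Mor Z T) :
  is_coproduct I N T j ->
  (forall i, comp (q i) (j i) = idm (N i)) ->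
  (forall i l, l <> i -> comp (q i) (j l) = 0) ->
  (forall i, comp (q i) x = 0) -> x = 0.
Proof.
move=> coprodT qj_id qj_0 qx0.
rewrite -(comp1m x) -(finite_coproduct_sum_id coprodT qj_id qj_0) comp_suml.
by apply: big1 => i _; rewrite -compA qx0 compm0.
Qed.

(* [e] is an idempotent with image [ker g] (so [e = k r] with [r k = 1] for a
   kernel [k] of [g]) whose image is stable under every endomorphism of [M]. *)
Definition invariant_kernel_projection (M X : C) (g : Mor M X) (e : Mor M M) :=
  [/\ comp g e = 0,
      forall Z (x : Mor Z M), comp g x = 0 -> comp e x = x
    & forall phi : Mor M M, comp phi e = comp e (comp phi e)].

Section InvariantKernelProjection.
Variables (M X : C) (g : Mor M X) (e : Mor M M).
Hypothesis ge : invariant_kernel_projection g e.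

Lemma invariant_kernel_projection_stable Z (phi : Mor M M) (x : Mor Z M) :
  comp g x = 0 -> comp g (comp phi x) = 0.
Proof.
case: ge => ge0 e_fix e_inv gx0.
by rewrite -(e_fix _ _ gx0) (compA phi) e_inv -compA compA ge0 comp0m.
Qed.

Lemma kernel_of_invariant_projection (K : C) (k : Mor K M) :
  is_kernel g k -> mono k /\ fully_invariant k /\ section k.
Proof.
move=> kerk; have mono_k := kernel_mono kerk; have [gk0 univ] := kerk.
split=> //; split.
  move=> phi; have [alpha [k_alpha _]] :=
    univ _ _ (invariant_kernel_projection_stable phi gk0).
  by exists alpha.
case: ge => ge0 e_fix _; have [r [kr _]] := univ _ _ ge0.
by exists r; apply: mono_k; rewrite compA kr e_fix // compm1.
Qed.

End InvariantKernelProjection.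

Lemma invariant_kernel_projection_of_summand (M X K : C) (g : Mor M X)
    (k : Mor K M) :
  is_kernel g k -> fully_invariant k -> section k ->
  exists e, invariant_kernel_projection g e.
Proof.
move=> [gk0 univ] fi_k [r rk]; exists (comp k r); split.
- by rewrite compA gk0 comp0m.
- move=> Z x gx0; have [v [kv _]] := univ Z x gx0.
  by rewrite -kv -!compA (compA r) rk comp1m.
- move=> phi; have [alpha k_alpha] := fi_k phi.
  by rewrite !(compA phi k r) k_alpha -!compA (compA r k) rk comp1m.
Qed.

(* Each [ker (g i)] is stable under every endomorphism, in particular under the
   other projections [e a]; this is why the composite lands in every kernel. *)
Lemma invariant_kernel_projection_meet (I : finType) (M X : C) (f : Mor M X)
    (Y : I -> C) (g : forall i, Mor M (Y i)) (e : I -> Mor M M) :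
  (forall Z (x : Mor Z M), comp f x = 0 <-> forall i, comp (g i) x = 0) ->
  (forall i, invariant_kernel_projection (g i) (e i)) ->
  invariant_kernel_projection f
    (foldr (fun i E => comp (e i) E) (idm M) (enum I)).
Proof.
move=> f_meet ge.
pose Ep l := foldr (fun i E => comp (e i) E) (idm M) l.
have Ep_fix l Z (x : Mor Z M) :
    (forall i, comp (g i) x = 0) -> comp (Ep l) x = x.
  move=> gx0; elim: l => [|i l IH] /=; first by rewrite comp1m.
  by rewrite -compA IH //; case: (ge i) => _ e_fix _; apply: e_fix.
have Ep_ker l i : i \in l -> comp (g i) (Ep l) = 0.
  elim: l => [|a l IH] //=; rewrite inE => /orP[/eqP-> | il].
    by case: (ge a) => ge0 _ _; rewrite compA ge0 comp0m.
  exact: (invariant_kernel_projection_stable (ge i) (e a) (IH il)).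
have gE0 i : comp (g i) (Ep (enum I)) = 0 by apply: Ep_ker; rewrite mem_enum.
split.
- by apply/f_meet.
- by move=> Z x /f_meet; apply: Ep_fix.
- move=> phi; rewrite Ep_fix // => i.
  exact: (invariant_kernel_projection_stable (ge i) phi (gE0 i)).
Qed.

Lemma strongly_rickart_coproduct_component (M : C) (I : Type) (N : I -> C)
    (S : C) (iota : forall i, Mor (N i) S) :
  is_coproduct I N S iota -> strongly_rickart M S ->
  forall i, strongly_rickart M (N i).
Proof.
move=> coprodS rickartS i f K k kerk.
have [p [p_iota _]] := coproduct_projection coprodS i.
apply: (rickartS (comp (iota i) f)); apply: is_kernel_comp_mono kerk.
by apply: section_mono; exists p.
Qed.

Lemma strongly_rickart_finitely_generated_coproduct (M : C) (I : Type)
    (N : I -> C) (S : C) (iota : forall i, Mor (N i) S) :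
  (forall (A B : C) (f : Mor A B), exists K (k : Mor K A), is_kernel f k) ->
  finitely_generated M -> is_coproduct I N S iota ->
  (forall i, strongly_rickart M (N i)) -> strongly_rickart M S.
Proof.
move=> has_kernels fgM coprodS rickartN f.
have [n [s [T [j [u [h [s_inj coprodT uj ->]]]]]]] := fgM I N S iota coprodS f.
move=> K k kerk.
have /fin_all_exists [p p_proj] := fun l => coproduct_projection coprodS (s l).
pose q l := comp (p l) u.
have q_id l : comp (q l) (j l) = idm _ by rewrite -compA uj; case: (p_proj l).
have q_0 l l' : l' <> l -> comp (q l) (j l') = 0.
  by move=> l'l; rewrite -compA uj; case: (p_proj l) => _ ->// /s_inj.
have f_meet Z (x : Mor Z M) :
    comp (comp u h) x = 0 <-> forall l, comp (comp (q l) h) x = 0.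
  split=> [uhx0 l | qhx0]; first by rewrite /q -!compA (compA u) uhx0 compm0.
  have hx0 : comp h x = 0.
    apply: (finite_coproduct_jointly_monic coprodT q_id q_0) => l.
    by rewrite compA.
  by rewrite -compA hx0 compm0.
have /fin_all_exists [e ge] :
    forall l, exists e, invariant_kernel_projection (comp (q l) h) e.
  move=> l; have [Kl [kl kerkl]] := has_kernels _ _ (comp (q l) h).
  have [_ [fi_kl sect_kl]] := rickartN (s l) _ _ _ kerkl.
  exact: invariant_kernel_projection_of_summand kerkl fi_kl sect_kl.
have meet_ge := invariant_kernel_projection_meet f_meet ge.
exact: (kernel_of_invariant_projection meet_ge kerk).
Qed.

Lemma strongly_rickart_coproduct (M : C) (I : Type) (N : I -> C) (S : C)
    (iota : forall i, Mor (N i) S) :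
  (forall (A B : C) (f : Mor A B), exists K (k : Mor K A), is_kernel f k) ->
  finitely_generated M -> is_coproduct I N S iota ->
  strongly_rickart M S <-> forall i, strongly_rickart M (N i).
Proof.
move=> has_kernels fgM coprodS; split.
  exact: strongly_rickart_coproduct_component.
exact: strongly_rickart_finitely_generated_coproduct.
Qed.

End Preadditive.

Definition opposite (C : PreAdditive) : PreAdditive := {|
  Obj := C;
  Mor := fun A B => Mor B A;
  comp := fun A B D g f => comp f g;
  idm := fun A => idm A;
  compA := fun A B D E h g f => esym (compA f g h);
  comp1m := fun A B f => compm1 f;
  compm1 := fun A B f => comp1m f;
  compDl := fun A B D g1 g2 f => compDr f g1 g2;
  compDr := fun A B D g f1 f2 => compDl f1 f2 g |}.

(* Products, cokernels, finite cogeneration and dual strong Rickartness in [C]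
   are, by conversion, coproducts, kernels, finite generation and strong
   Rickartness in [opposite C]. *)
Lemma dual_strongly_rickart_product (C : PreAdditive) (N : C) (I : Type)
    (M : I -> C) (P : C) (pi : forall i, Mor P (M i)) :
  (forall (A B : C) (f : Mor A B), exists Q (c : Mor B Q), is_cokernel f c) ->
  finitely_cogenerated N -> is_product I M P pi ->
  dual_strongly_rickart P N <-> forall i, dual_strongly_rickart (M i) N.
Proof.
move=> has_cokernels fcN prodP.
exact: (@strongly_rickart_coproduct (opposite C) N I M P pi
          (fun A B f => has_cokernels B A f) fcN prodP).
Qed.

Theorem corollary3p2 (A : PreAdditive) (HA : is_abelian A) :
  (has_coproducts A ->
   forall (M : A), finitely_generated M ->
   forall (I : Type) (N : I -> A) (S : A) (iota : forall i, Mor (N i) S),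
     is_coproduct I N S iota ->
     (strongly_rickart M S <-> forall i, strongly_rickart M (N i)))
  /\
  (has_products A ->
   forall (N : A), finitely_cogenerated N ->
   forall (I : Type) (M : I -> A) (P : A) (pi : forall i, Mor P (M i)),
     is_product I M P pi ->
     (forall i, dual_strongly_rickart (M i) N) ->
     (dual_strongly_rickart P N <-> forall i, dual_strongly_rickart (M i) N)).
Proof.
have [_ [_ [has_kernels [has_cokernels _]]]] := HA.
split=> [_ M fgM I N S iota coprodS | _ N fcN I M P pi prodP _].
  exact: strongly_rickart_coproduct.
exact: dual_strongly_rickart_product.
Qed.
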